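(* Let $P$ be an Eulerian poset. Suppose that to every interval $[x,y]$ of $P$ (viewed as an Eulerian poset of rank $\rho(y)-\rho(x)$) a polynomial $B'([x,y];u,v)\in\mathbb{Z}[u,v]$ is assigned such that: (a) $B'([x,x];u,v)=1$ for all $x$; (b) for $x<y$ the degree of $B'([x,y];u,v)$ in $v$ is less than $(\rho(y)-\rho(x))/2$; (c) for all $x\le y$, $$\sum_{x\le z\le y}B'([x,z];u^{-1},v^{-1})(uv)^{\rho(z)-\rho(x)}(v-u)^{\rho(y)-\rho(z)}=\sum_{x\le z\le y}B'([z,y];u,v)(uv-1)^{\rho(z)-\rho(x)}.$$ Then $B'([x,y];u,v)=B([x,y];u,v)$ for all $x\le y$; in particular $B'(P;u,v)=B(P;u,v)$.
   Context: An Eulerian poset is a finite poset with least element $\hat0$, greatest element $\hat1$, all maximal chains of the same length (the rank $d$), rank function $\rho$, and Möbius function $\mu(x,y)=(-1)^{\rho(y)-\rho(x)}$ for $x\le y$; intervals $[x,y]$ are Eulerian of rank $\rho(y)-\rho(x)$. For Eulerian $Q$ of rank $e$: $G(Q,t)=H(Q,t)=1$ if $e=0$; for $e>0$, $H(Q,t)=\sum_{\hat0<x\le\hat1}(t-1)^{\rho(x)-1}G([x,\hat1],t)$, $G(Q,t)=\tau_{<e/2}((1-t)H(Q,t))$ with $\tau_{<r}(\sum a_it^i)=\sum_{i<r}a_it^i$. $B(Q;u,v)\in\mathbb{Z}[u,v]$ is defined by $B=1$ if $e=0$ and for $e>0$ recursively by $\sum_{\hat0\le x\le\hat1}B([\hat0,x];u,v)u^{e-\rho(x)}G([x,\hat1],u^{-1}v)=G(Q,uv)$.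 *)

From HB Require Import structures.
From mathcomp Require Import all_boot all_order all_algebra fraction.
Set Implicit Arguments. Unset Strict Implicit. Unset Printing Implicit Defensive.
Import Order.TTheory GRing.Theory Num.Theory.
Local Open Scope ring_scope.

(* Bivariate integer polynomials Z[u,v] are represented as {poly {poly int}}:
   the OUTER variable is v, the INNER variable (coefficients) is u.
   So "degree in v" of p is (size p).-1 (and the zero polynomial, of degree
   -infinity, gets size 0).                                                  *)
Notation Zuv := {poly {poly int}}.

(* The field of rational functions Q(u,v) = Frac(Z[u,v]), where we evaluate
   Laurent/rational expressions such as B(u^-1,v^-1) or G(u^-1 v). *)
Notation Kuv := {fraction Zuv}.
Definition uK : Kuv := tofrac ((('X : {poly int})%:P) : Zuv).
Definition vK : Kuv := tofrac ('X : Zuv).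

Definition eval_uv (a b : Kuv) (p : Zuv) : Kuv :=
  (map_poly (fun q : {poly int} => (map_poly (fun c : int => c%:~R) q).[a]) p).[b].

Definition eval_t (p : {poly int}) (a : Kuv) : Kuv :=
  (map_poly (fun c : int => c%:~R) p).[a].

Section Poset.
Context {d : Order.disp_t} {P : finTBPOrderType d}.

Definition covers (x y : P) : bool :=
  (x < y)%O && [forall z : P, ~~ ((x < z)%O && (z < y)%O)].

(* rank function: rho(\hat0)=0 and rho increases by one along covers.
   Existence of such rho is equivalent to all maximal chains having the
   same length (rho \top = rank d). *)
Definition rank_function (rho : P -> nat) : Prop :=
  rho \bot%O = 0%N /\ forall x y : P, covers x y -> rho y = (rho x).+1.

(* Moebius function, by the usual recursion
   mu(x,x)=1, mu(x,y) = - sum_{x<=z<y} mu(x,z) for x<y, 0 otherwise.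
   The fuel #|P| exceeds the length of any chain. *)
Fixpoint mobius_rec (n : nat) (x y : P) : int :=
  match n with
  | 0 => 0
  | n'.+1 =>
    if x == y then 1
    else if (x <= y)%O then
      - \sum_(z : P | (x <= z)%O && (z < y)%O) mobius_rec n' x z
    else 0
  end.
Definition mobius (x y : P) : int := mobius_rec #|P| x y.

Definition eulerian (rho : P -> nat) : Prop :=
  rank_function rho /\
  forall x y : P, (x <= y)%O -> mobius x y = (-1) ^+ (rho y - rho x)%N.

Definition trunc_half (e : nat) (p : {poly int}) : {poly int} :=
  \poly_(i < size p) (if (i.*2 < e)%N then p`_i else 0).

Fixpoint Hrec (rho : P -> nat) (n : nat) (x y : P) : {poly int} :=
  if (rho y - rho x == 0)%N then 1 else
  match n with
  | 0 => 0
  | n'.+1 =>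
    \sum_(z : P | (x < z)%O && (z <= y)%O)
      ('X - 1) ^+ (rho z - rho x)%N.-1 *
      (if (rho y - rho z == 0)%N then 1
       else trunc_half (rho y - rho z)%N ((1 - 'X) * Hrec rho n' z y))
  end.

Definition Hpoly (rho : P -> nat) (x y : P) : {poly int} := Hrec rho #|P| x y.

Definition Gpoly (rho : P -> nat) (x y : P) : {poly int} :=
  if (rho y - rho x == 0)%N then 1
  else trunc_half (rho y - rho x)%N ((1 - 'X) * Hpoly rho x y).

(* B([x,y];u,v), defined in Q(u,v) by solving the defining relation
   sum_{x<=z<=y} B([x,z]) u^{rho y - rho z} G([z,y], u^-1 v) = G([x,y], uv)
   for the (z = y)-term, whose coefficient is u^0 G([y,y]) = 1. *)
Fixpoint Brec (rho : P -> nat) (n : nat) (x y : P) : Kuv :=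
  if (rho y - rho x == 0)%N then 1 else
  match n with
  | 0 => 0
  | n'.+1 =>
    eval_t (Gpoly rho x y) (uK * vK) -
    \sum_(z : P | (x <= z)%O && (z < y)%O)
      Brec rho n' x z * uK ^+ (rho y - rho z)%N * eval_t (Gpoly rho z y) (uK^-1 * vK)
  end.

Definition Bfun (rho : P -> nat) (x y : P) : Kuv := Brec rho #|P| x y.

End Poset.

From HB Require Import structures.
From mathcomp Require Import all_boot all_order all_algebra fraction zify.
Import Order.TTheory GRing.Theory Num.Theory.
Set Implicit Arguments. Unset Strict Implicit. Unset Printing Implicit Defensive.
Local Open Scope ring_scope.

(* Write r(x,y) = rho(y) - rho(x) and let D(x,y) be the defect of B' in the relation
   defining B:  D(x,y) = sum_{x<=z<=y} B'(x,z) u^r(z,y) G([z,y], v/u) - G([x,y], uv).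
   Since mu(x,y) = (-1)^r(x,y), the G polynomials satisfy the inversion formula
   t^r(x,y) G([x,y], 1/t) = sum_{x<=z<=y} (t-1)^r(x,z) G([z,y], t), and with it
   hypothesis (c) becomes (uv)^r(x,y) D(x,y)(1/u,1/v) = sum_{x<=z<=y} (uv-1)^r(x,z) D(z,y).
   By induction on the rank, D(z,y) = 0 for z > x, so D(x,y) is self-dual up to the
   factor (uv)^r(x,y); having v-degree < r(x,y)/2 (hypothesis (b) and the truncation
   in G), it must vanish. So B' satisfies the recursion defining B, whose solution is
   unique. *)

Definition evt (a : Kuv) : {rmorphism {poly int} -> Kuv} :=
  horner_eval a \o map_poly intr.
Definition evuv (a b : Kuv) : {rmorphism Zuv -> Kuv} :=
  horner_eval b \o map_poly (evt a).

Lemma eval_tE p a : eval_t p a = evt a p. Proof. by []. Qed.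

Lemma evtX a : evt a 'X = a.
Proof. by rewrite /= map_polyX horner_evalE hornerX. Qed.

Lemma evtC a (c : int) : evt a c%:P = c%:~R.
Proof. by rewrite /= map_polyC horner_evalE hornerC. Qed.

Lemma evtZXn a (c : int) n : evt a (c *: 'X^n) = c%:~R * a ^+ n.
Proof. by rewrite -mul_polyC rmorphM rmorphXn evtX evtC. Qed.

Lemma evuvX a b : evuv a b 'X = b.
Proof. by rewrite /= map_polyX horner_evalE hornerX. Qed.

Lemma evuvC a b (c : {poly int}) : evuv a b c%:P = evt a c.
Proof. by rewrite /= map_polyC horner_evalE hornerC. Qed.

Lemma evuv_poly a b n (E : nat -> {poly int}) :
  evuv a b (\poly_(i < n) E i) = \sum_(i < n) evt a (E i) * b ^+ i.
Proof.
rewrite poly_def rmorph_sum; apply: eq_bigr => i _.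
by rewrite -mul_polyC rmorphM rmorphXn evuvX evuvC.
Qed.

Lemma evt_wide a (p : {poly int}) n : (size p <= n)%N ->
  evt a p = \sum_(i < n) (p`_i)%:~R * a ^+ i.
Proof.
move=> sp; rewrite /= horner_evalE (horner_coef_wide _ (leq_trans (size_poly _ _) sp)).
by apply: eq_bigr => i _; rewrite coef_map.
Qed.

Lemma evt_uK p : evt uK p = tofrac p%:P.
Proof.
rewrite [RHS](poly_initial ((@tofrac Zuv) \o polyC)) /=; congr (_.[_]).
by apply: eq_map_poly => c /=; rewrite -[c in RHS]intz !rmorph_int.
Qed.

Lemma evuv_uK_vK p : evuv uK vK p = tofrac p.
Proof.
rewrite [RHS](poly_initial (@tofrac Zuv)) /=; congr (_.[_]).
by apply: eq_map_poly => q /=; rewrite -evt_uK.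
Qed.

Lemma evt_uK_inj : injective (evt uK).
Proof. by move=> p q; rewrite !evt_uK => /eqP; rewrite tofrac_eq => /eqP/polyC_inj. Qed.

Lemma evuv_uK_vK_inj : injective (evuv uK vK).
Proof. by move=> p q; rewrite !evuv_uK_vK => /eqP; rewrite tofrac_eq => /eqP. Qed.

Lemma uK_neq0 : uK != 0.
Proof. by rewrite tofrac_eq0 polyC_eq0 polyX_eq0. Qed.

Lemma vK_neq0 : vK != 0.
Proof. by rewrite tofrac_eq0 polyX_eq0. Qed.

Definition recip (e : nat) (p : {poly int}) : {poly int} := \poly_(i < e.+1) p`_(e - i).

Lemma evt_recip (a : Kuv) e (p : {poly int}) : a != 0 -> (size p <= e.+1)%N ->
  evt a (recip e p) = a ^+ e * evt a^-1 p.
Proof.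
move=> a0 sp; rewrite (evt_wide _ sp) (evt_wide _ (size_poly _ _)) mulr_sumr.
rewrite (reindex_inj rev_ord_inj); apply: eq_bigr => i _ /=.
have le_ie : (i <= e)%N by rewrite -ltnS.
rewrite coef_poly subSS ifT ?subKn //; last by lia.
rewrite mulrCA exprVn; congr (_ * _).
have -> : a ^+ e = a ^+ (e - i) * a ^+ i by rewrite -exprD subnK.
by rewrite mulfK ?expf_neq0.
Qed.

Lemma coef_trunc_half e (q : {poly int}) j :
  (trunc_half e q)`_j = if (j.*2 < e)%N then q`_j else 0.
Proof.
rewrite coef_poly; case: ltnP => // le_qj.
by rewrite nth_default //; case: ifP.
Qed.

Lemma recip_trunc_half e (p : {poly int}) : (size p <= e.+1)%N -> recip e p = - p ->
  recip e (trunc_half e (- p)) = trunc_half e (- p) + p.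
Proof.
move=> sp anti_p.
have coef_anti i : (i <= e)%N -> p`_(e - i) = - p`_i.
  by move=> le_ie; rewrite -coefN -anti_p coef_poly ltnS le_ie.
apply/polyP => i; rewrite coef_poly coefD !coef_trunc_half !coefN ltnS.
case: (leqP i e) => [le_ie|lt_ei]; last first.
  have -> : (i.*2 < e)%N = false by lia.
  by rewrite add0r nth_default // (leq_trans sp).
case: (ltngtP i.*2 e) => [lt_ie|lt_ei|eq_ie].
- have -> : ((e - i).*2 < e)%N = false by lia.
  by rewrite addNr.
- have -> : ((e - i).*2 < e)%N by lia.
  by rewrite coef_anti // opprK add0r.
- have eq_ei : (e - i = i)%N by lia.
  rewrite eq_ei eq_ie ltnn add0r; have := coef_anti i le_ie.
  by rewrite eq_ei => /eqP; rewrite -subr_eq0 opprK -mulr2n mulrn_eq0 => /eqP.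
Qed.

(* The [0 < j] exemption lets constants, such as [B' x x = 1], qualify for [e = 0]. *)
Definition low_deg (R : nzRingType) (e : nat) (p : {poly R}) : Prop :=
  forall j, (0 < j)%N -> (e <= j.*2)%N -> p`_j = 0.

Section LowDegree.
Variable R : nzRingType.
Implicit Types p q : {poly R}.

Lemma low_deg0 e : low_deg e (0 : {poly R}).
Proof. by move=> j _ _; rewrite coef0. Qed.

Lemma low_deg1 : low_deg 0 (1 : {poly R}).
Proof. by move=> j j_gt0 _; rewrite coef1 gtn_eqF. Qed.

Lemma low_degD e p q : low_deg e p -> low_deg e q -> low_deg e (p + q).
Proof. by move=> lp lq j j0 ej; rewrite coefD lp ?lq ?addr0. Qed.

Lemma low_degN e p : low_deg e p -> low_deg e (- p).
Proof. by move=> lp j j0 ej; rewrite coefN lp ?oppr0. Qed.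

Lemma low_deg_sum e (I : finType) (A : pred I) (F : I -> {poly R}) :
  (forall i, A i -> low_deg e (F i)) -> low_deg e (\sum_(i | A i) F i).
Proof. by move=> lF; apply: big_ind => //; [exact: low_deg0 | exact: low_degD]. Qed.

Lemma low_degM a b p q : low_deg a p -> low_deg b q -> low_deg (a + b) (p * q).
Proof.
move=> lp lq j j0 abj; rewrite coefM big1 // => i _.
have [i0|i_gt0] := posnP i; first by rewrite i0 subn0 lq ?mulr0 //; lia.
have [ji0|ji_gt0] := posnP (j - i).
  by rewrite lp ?mul0r //; have := ltn_ord i; lia.
have [ai|ia] := leqP a (i : nat).*2; first by rewrite lp ?mul0r.
by rewrite lq ?mulr0 //; have := ltn_ord i; lia.
Qed.

Lemma size_low_deg e p : low_deg e p -> (size p <= e.+1)%N.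
Proof. by move=> lp; apply/leq_sizeP => j le_ej; apply: lp; lia. Qed.

End LowDegree.

Definition homog (m : nat) (g : {poly int}) : Zuv :=
  \poly_(i < m.+1) (g`_i *: 'X^(m - i)).

Definition subst_uv (g : {poly int}) : Zuv := \poly_(i < size g) (g`_i *: 'X^i).

Lemma evuv_homog (a b : Kuv) m (g : {poly int}) : a != 0 -> (size g <= m.+1)%N ->
  evuv a b (homog m g) = a ^+ m * evt (a^-1 * b) g.
Proof.
move=> a0 sg; rewrite evuv_poly (evt_wide _ sg) mulr_sumr.
apply: eq_bigr => i _; rewrite evtZXn exprMn exprVn.
have le_im : (i <= m)%N by rewrite -ltnS.
have -> : a ^+ m = a ^+ (m - i) * a ^+ i by rewrite -exprD subnK.
by rewrite [RHS]mulrCA (mulrA (_ * _)) mulfK ?expf_neq0 // !mulrA.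
Qed.

Lemma evuv_subst_uv (a b : Kuv) (g : {poly int}) : evuv a b (subst_uv g) = evt (a * b) g.
Proof.
rewrite evuv_poly (evt_wide _ (leqnn _)).
by apply: eq_bigr => i _; rewrite evtZXn exprMn mulrA.
Qed.

Lemma low_deg_homog m (g : {poly int}) : low_deg m g -> low_deg m (homog m g).
Proof. by move=> lg j j0 mj; rewrite coef_poly lg ?scale0r ?if_same. Qed.

Lemma low_deg_subst_uv m (g : {poly int}) : low_deg m g -> low_deg m (subst_uv g).
Proof. by move=> lg j j0 mj; rewrite coef_poly lg ?scale0r ?if_same. Qed.

Lemma selfdual_low_deg_eq0 e (q : Zuv) : (0 < e)%N -> low_deg e q ->
  evuv uK vK q = (uK * vK) ^+ e * evuv uK^-1 vK^-1 q -> q = 0.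
Proof.
move=> e_gt0 low_q dual_q; apply/eqP/negPn/negP => q_neq0.
set s := size q.
have lead_q_neq0 : q`_s.-1 != 0 by rewrite -lead_coefE lead_coef_eq0.
have deg_q : (s.-1.*2 < e)%N.
  rewrite ltnNge; apply: contra lead_q_neq0 => le_es.
  by apply/eqP/low_q => //; case: (s.-1) le_es => //; rewrite leqNgt e_gt0.
set M := \max_(j < s) size (q`_j)%R.
have size_qM j : (size (q`_j)%R <= M)%N.
  have [lt_js|le_sj] := ltnP j s; first exact: (leq_bigmax_cond (Ordinal lt_js)).
  by rewrite nth_default ?size_poly0.
(* [Q] is [u^M (uv)^e q(1/u, 1/v)]; all its powers of [v] exceed the [v]-degree of [q]. *)
pose Q : Zuv := \sum_(j < s) (recip (M + e) q`_j)%:P * 'X^(e - j).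
have : evuv uK vK Q = evuv uK vK ('X%:P ^+ M * q).
  rewrite rmorph_sum rmorphM rmorphXn evuvC evtX dual_q -[q in RHS]coefK evuv_poly.
  rewrite mulrA mulr_sumr; apply: eq_bigr => j _.
  have le_je : (j <= e)%N by have := ltn_ord j; lia.
  rewrite rmorphM evuvC rmorphXn evuvX evt_recip ?uK_neq0 //; last first.
    by rewrite (leq_trans (size_qM j)) //; lia.
  rewrite exprVn exprD exprMn -!mulrA; congr (_ * (_ * _)); rewrite mulrCA; congr (_ * _).
  have -> : vK ^+ e = vK ^+ (e - j) * vK ^+ j by rewrite -exprD subnK.
  by rewrite mulfK ?expf_neq0 ?vK_neq0.
move/evuv_uK_vK_inj/(congr1 (fun p : Zuv => p`_s.-1)) => /=.
rewrite coef_sum big1 => [|j _]; last first.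
  by rewrite coefCM coefXn (_ : (s.-1 == e - j)%N = false) ?mulr0 //; have := ltn_ord j; lia.
rewrite -rmorphXn coefCM => /esym/eqP; rewrite mulf_eq0 expf_eq0 polyX_eq0 andbF /=.
exact/negP.
Qed.

Section IntervalSums.
Context {d : Order.disp_t} {P : finPOrderType d} {R : nmodType}.
Implicit Types (x y z w : P) (F : P -> R).

Lemma sum_itv_lo x y F : (x <= y)%O ->
  \sum_(z | (x <= z <= y)%O) F z = F x + \sum_(z | (x < z <= y)%O) F z.
Proof.
move=> le_xy; rewrite (bigD1 x) /= ?lexx ?le_xy //; congr (_ + _).
by apply: eq_bigl => z; rewrite lt_def eq_sym andbC andbA.
Qed.

Lemma sum_itv_hi x y F : (x <= y)%O ->
  \sum_(z | (x <= z <= y)%O) F z = F y + \sum_(z | (x <= z < y)%O) F z.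
Proof.
move=> le_xy; rewrite (bigD1 y) /= ?lexx ?le_xy //; congr (_ + _).
by apply: eq_bigl => z; rewrite lt_neqAle andbCA andbC.
Qed.

Lemma sum_itv_id x F : \sum_(z | (x <= z <= x)%O) F z = F x.
Proof. by rewrite (big_pred1 x) // => z /=; rewrite -eq_le eq_sym. Qed.

Lemma exchange_sum_itv (A : pred P) y (F : P -> P -> R) :
  (forall z w, A z -> (z <= w)%O -> A w) ->
  \sum_(z | A z && (z <= y)%O) \sum_(w | (z <= w <= y)%O) F z w =
  \sum_(w | A w && (w <= y)%O) \sum_(z | A z && (z <= w)%O) F z w.
Proof.
move=> A_up; rewrite (exchange_big_dep (fun w => A w && (w <= y)%O)) /=; last first.
  by move=> z w /andP[Az _] /andP[zw wy]; rewrite (A_up z w) //.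
apply: eq_bigr => w /andP[Aw wy]; apply: eq_bigl => z.
by apply/andP/andP => [[/andP[-> _] /andP[-> _]]|[-> zw]] //; rewrite zw wy (le_trans zw).
Qed.

End IntervalSums.

Section IntervalCard.
Context {d : Order.disp_t} {P : finPOrderType d}.

Definition itv_oc (x y : P) : {set P} := [set w | (x < w <= y)%O].

Lemma in_itv_oc (x y w : P) : (w \in itv_oc x y) = (x < w <= y)%O.
Proof. by rewrite inE. Qed.

Lemma card_itv_oc_ltl (x z y : P) : (x < z)%O -> (z <= y)%O ->
  (#|itv_oc z y| < #|itv_oc x y|)%N.
Proof.
move=> lt_xz le_zy; apply: proper_card; apply/properP; split.
  by apply/subsetP => w; rewrite !in_itv_oc => /andP[lt_zw ->]; rewrite (lt_trans lt_xz).
by exists z; rewrite !in_itv_oc ?lt_xz ?le_zy // ltxx.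
Qed.

Lemma card_itv_oc_ltr (x z y : P) : (x < z)%O -> (z < y)%O ->
  (#|itv_oc x z| < #|itv_oc x y|)%N.
Proof.
move=> lt_xz lt_zy; apply: proper_card; apply/properP; split.
  apply/subsetP => w; rewrite !in_itv_oc => /andP[-> le_wz].
  exact: le_trans le_wz (ltW lt_zy).
by exists y; rewrite !in_itv_oc ?lexx ?(lt_trans lt_xz lt_zy) ?(lt_geF lt_zy) ?andbF.
Qed.

End IntervalCard.

Section Eulerian.
Context {d : Order.disp_t} {P : finTBPOrderType d} (rho : P -> nat).
Hypothesis rhoE : eulerian rho.
Implicit Types x y z w : P.
Local Notation r x y := (rho y - rho x)%N.

Lemma exists_cover x y :
  (x < y)%O -> exists2 z, covers x z & (z <= y)%O.
Proof.
move=> lt_xy; have y_in : (x < y <= y)%O by rewrite lt_xy lexx.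
have [z /andP[lt_xz le_zy] z_min] :=
  @arg_minnP _ y (fun w => (x < w <= y)%O) (fun w => #|itv_oc x w|) y_in.
exists z => //; rewrite /covers lt_xz; apply/forallP => w; apply/negP => /andP[lt_xw lt_wz].
have := z_min w; rewrite lt_xw (le_trans (ltW lt_wz) le_zy) => /(_ isT).
by rewrite leqNgt (card_itv_oc_ltr lt_xw lt_wz).
Qed.

Lemma rho_lt_itv x y : (x < y)%O -> (rho x < rho y <= rho x + #|itv_oc x y|)%N.
Proof.
have [n] := ubnP #|itv_oc x y|; elim: n x => // n IH x lt_card lt_xy.
have [z cov_xz le_zy] := exists_cover lt_xy.
have rho_z : rho z = (rho x).+1 by apply: rhoE.1.2.
have lt_xz : (x < z)%O by case/andP: cov_xz.
have [<-|ne_zy] := eqVneq z y.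
  have : (0 < #|itv_oc x z|)%N by apply/card_gt0P; exists z; rewrite in_itv_oc lt_xz lexx.
  by lia.
have lt_zy : (z < y)%O by rewrite lt_neqAle ne_zy.
have lt_zxy := card_itv_oc_ltl lt_xz le_zy.
by have := IH z (leq_trans lt_zxy _) lt_zy; lia.
Qed.

Lemma rho_lt x y : (x < y)%O -> (rho x < rho y)%N.
Proof. by case/rho_lt_itv/andP. Qed.

Lemma rho_le x y : (x <= y)%O -> (rho x <= rho y)%N.
Proof. by rewrite le_eqVlt => /predU1P[->|/rho_lt/ltnW]. Qed.

Lemma rank_lt_card x y : (x <= y)%O -> (r x y < #|P|)%N.
Proof.
rewrite le_eqVlt => /predU1P[->|lt_xy]; first by rewrite subnn; apply/card_gt0P; exists x.
have x_out : x \notin itv_oc x y by rewrite in_itv_oc ltxx.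
have card_lt : (#|itv_oc x y| < #|P|)%N.
  rewrite -cardsT; apply: proper_card; rewrite properT.
  by apply: contraNneq x_out => ->; rewrite in_setT.
by have := rho_lt_itv lt_xy; lia.
Qed.

Lemma rankD x z y : (x <= z)%O -> (z <= y)%O -> r x y = (r x z + r z y)%N.
Proof. by move=> /rho_le le_xz /rho_le le_zy; lia. Qed.

Lemma rank_ltl x z y : (x < z)%O -> (z <= y)%O -> (r z y < r x y)%N.
Proof. by move=> /rho_lt lt_xz /rho_le le_zy; lia. Qed.

Lemma rank_ltr x z y : (x <= z)%O -> (z < y)%O -> (r x z < r x y)%N.
Proof. by move=> /rho_le le_xz /rho_lt lt_zy; lia. Qed.

Lemma rank_ind (Q : P -> P -> Prop) :
  (forall x y, (forall x' y', (r x' y' < r x y)%N -> Q x' y') -> Q x y) ->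
  forall x y, Q x y.
Proof.
move=> IH x y; have [n] := ubnP (r x y); elim: n x y => // n IHn x y lt_n.
by apply: IH => x' y' lt_r; apply: IHn; lia.
Qed.

Lemma mobius_rec_stable n m x y : (r x y < n)%N -> (r x y < m)%N ->
  mobius_rec n x y = mobius_rec m x y.
Proof.
elim: n m x y => [|n IH] [|m] x y lt_n lt_m; rewrite ?ltn0 // in lt_n lt_m *.
rewrite /=; case: eqP => // _; case: ifP => // le_xy; congr (- _).
by apply: eq_bigr => z /andP[le_xz lt_zy]; apply: IH; have := rank_ltr le_xz lt_zy; lia.
Qed.

Lemma sum_sign_itv (R : pzRingType) x y : (x < y)%O ->
  \sum_(z | (x <= z <= y)%O) ((-1) ^+ r x z : R) = 0.
Proof.
move=> lt_xy.
suff sum_int : \sum_(z | (x <= z <= y)%O) ((-1) ^+ r x z : int) = 0.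
  transitivity (\sum_(z | (x <= z <= y)%O) ((-1) ^+ r x z : int)%:~R : R).
    by apply: eq_bigr => z _; rewrite rmorphXn rmorphN1.
  by rewrite -rmorph_sum sum_int.
have := rhoE.2 x y (ltW lt_xy); rewrite /mobius.
case: #|P| (rank_lt_card (ltW lt_xy)) => // n lt_n /=.
rewrite (lt_eqF lt_xy) (ltW lt_xy) => /eqP; rewrite eqr_oppLR => /eqP mob.
rewrite sum_itv_hi ?(ltW lt_xy) // -[X in X + _]opprK -mob.
apply/eqP; rewrite addrC subr_eq0; apply/eqP.
apply: eq_bigr => z /andP[le_xz lt_zy]; rewrite -(rhoE.2 x z le_xz).
apply: mobius_rec_stable; first exact: rank_lt_card.
by have := rank_ltr le_xz lt_zy; lia.
Qed.

Lemma sum_sign_conv (R : comPzRingType) (c : R) x y (F : P -> R) :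
  \sum_(z | (x < z <= y)%O) (- c) ^+ r x z * \sum_(w | (z <= w <= y)%O) c ^+ r z w * F w
  = - \sum_(w | (x < w <= y)%O) c ^+ r x w * F w.
Proof.
under eq_bigr do rewrite mulr_sumr.
rewrite (exchange_sum_itv (A := fun z => x < z)%O) /=; last by move=> z w /lt_le_trans; apply.
rewrite -sumrN; apply: eq_bigr => w /andP[lt_xw le_wy].
transitivity ((\sum_(z | (x < z <= w)%O) (-1) ^+ r x z) * (c ^+ r x w * F w)).
  rewrite mulr_suml; apply: eq_bigr => z /andP[lt_xz le_zw].
  by rewrite (rankD (ltW lt_xz) le_zw) (exprNn c) exprD !mulrA.
have := sum_sign_itv R lt_xw; rewrite sum_itv_lo ?(ltW lt_xw) // subnn expr0 => /eqP.
by rewrite addrC addr_eq0 => /eqP ->; rewrite mulN1r.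
Qed.

End Eulerian.

Section KLPolynomials.
Context {d : Order.disp_t} {P : finTBPOrderType d} (rho : P -> nat).
Hypothesis rhoE : eulerian rho.
Implicit Types x y z w : P.
Local Notation r x y := (rho y - rho x)%N.
Local Notation G := (Gpoly rho).

Lemma Hrec_stable n m x y : (r x y <= n)%N -> (r x y <= m)%N ->
  Hrec rho n x y = Hrec rho m x y.
Proof.
elim: n m x y => [|n IH] m x y le_n le_m.
  by case: m le_m => [|m] _ /=; rewrite (_ : r x y = 0%N) //; lia.
case: m le_m => [|m] le_m; first by rewrite /= (_ : r x y = 0%N) //; lia.
rewrite /=; case: eqP => // _; apply: eq_bigr => z /andP[lt_xz le_zy].
by rewrite (IH m) //; have := rank_ltl rhoE lt_xz le_zy; lia.
Qed.

Lemma Brec_stable n m x y : (r x y <= n)%N -> (r x y <= m)%N ->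
  Brec rho n x y = Brec rho m x y.
Proof.
elim: n m x y => [|n IH] m x y le_n le_m.
  by case: m le_m => [|m] _ /=; rewrite (_ : r x y = 0%N) //; lia.
case: m le_m => [|m] le_m; first by rewrite /= (_ : r x y = 0%N) //; lia.
rewrite /=; case: eqP => // _; congr (_ - _); apply: eq_bigr => z /andP[le_xz lt_zy].
by rewrite (IH m) //; have := rank_ltr rhoE le_xz lt_zy; lia.
Qed.

Lemma Gpoly_id x : G x x = 1.
Proof. by rewrite /Gpoly subnn. Qed.

Lemma GpolyE x y : (x < y)%O -> G x y = trunc_half (r x y) ((1 - 'X) * Hpoly rho x y).
Proof. by move=> /(rho_lt rhoE) lt_rxy; rewrite /Gpoly ifF //; lia. Qed.

Lemma HpolyE x y : (x < y)%O ->
  Hpoly rho x y = \sum_(z | (x < z <= y)%O) ('X - 1) ^+ (r x z).-1 * G z y.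
Proof.
move=> lt_xy; have lt_rxy := rho_lt rhoE lt_xy.
rewrite /Hpoly; case: #|P| (rank_lt_card rhoE (ltW lt_xy)) => // n lt_n.
rewrite [LHS]/= ifF; last by lia.
apply: eq_bigr => z /andP[lt_xz le_zy]; rewrite /Gpoly; case: eqP => // _.
have lt_rzy := rank_ltl rhoE lt_xz le_zy.
by rewrite (@Hrec_stable _ #|P|) //; [lia | exact/ltnW/rank_lt_card].
Qed.

Lemma low_deg_Gpoly x y : low_deg (r x y) (G x y).
Proof.
rewrite /Gpoly; case: eqP => [->|_]; first exact: low_deg1.
by move=> j _ le_rj; rewrite coef_trunc_half ltnNge le_rj.
Qed.

Lemma size_Gpoly x y : (size (G x y) <= (r x y).+1)%N.
Proof. exact/size_low_deg/low_deg_Gpoly. Qed.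

Lemma Bfun_id x : Bfun rho x x = 1.
Proof. by rewrite /Bfun; case: #|P| => [|n] /=; rewrite subnn. Qed.

Lemma BfunE x y : (x < y)%O ->
  Bfun rho x y = eval_t (G x y) (uK * vK) -
    \sum_(z | (x <= z < y)%O) Bfun rho x z * uK ^+ r z y * eval_t (G z y) (uK^-1 * vK).
Proof.
move=> lt_xy; have lt_rxy := rho_lt rhoE lt_xy.
rewrite {1}/Bfun; case: #|P| (rank_lt_card rhoE (ltW lt_xy)) => // n lt_n.
rewrite [LHS]/= ifF; last by lia.
congr (_ - _); apply: eq_bigr => z /andP[le_xz lt_zy].
have lt_rxz := rank_ltr rhoE le_xz lt_zy.
by rewrite /Bfun (@Brec_stable _ #|P|) //; [lia | exact/ltnW/rank_lt_card].
Qed.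

Lemma Gpoly_trunc x y : (x < y)%O ->
  G x y = trunc_half (r x y) (- \sum_(z | (x < z <= y)%O) ('X - 1) ^+ r x z * G z y).
Proof.
move=> lt_xy; rewrite GpolyE // HpolyE // mulr_sumr -sumrN; congr trunc_half.
apply: eq_bigr => z /andP[lt_xz _]; have := rho_lt rhoE lt_xz => lt_rxz.
by rewrite mulrA -opprB mulNr -exprS prednK ?mulNr //; lia.
Qed.

Lemma evt_sum_XB1 (a : Kuv) (A : pred P) x y :
  evt a (\sum_(z | A z) ('X - 1) ^+ r x z * G z y) =
  \sum_(z | A z) (a - 1) ^+ r x z * evt a (G z y).
Proof.
by rewrite rmorph_sum; apply: eq_bigr => z _; rewrite rmorphM rmorphXn rmorphB evtX rmorph1.
Qed.

Lemma Gpoly_recip x y : (x <= y)%O ->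
  recip (r x y) (G x y) = \sum_(z | (x <= z <= y)%O) ('X - 1) ^+ r x z * G z y.
Proof.
move: x y; apply: (@rank_ind _ _ rho) => x y IH le_xy.
have [<-|ne_xy] := eqVneq x y.
  rewrite sum_itv_id subnn Gpoly_id expr0 mul1r.
  by apply/polyP => -[|i]; rewrite coef_poly !coef1.
have lt_xy : (x < y)%O by rewrite lt_neqAle ne_xy.
set R := \sum_(z | (x < z <= y)%O) ('X - 1) ^+ r x z * G z y.
have G_R : G x y = trunc_half (r x y) (- R) := Gpoly_trunc lt_xy.
have size_R : (size R <= (r x y).+1)%N.
  rewrite /R; apply: (big_ind (fun p : {poly int} => size p <= (r x y).+1)%N).
  - by rewrite size_poly0.
  - by move=> p q sp sq; rewrite (leq_trans (size_polyD _ _)) // geq_max sp sq.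
  move=> z /andP[lt_xz le_zy].
  rewrite (leq_trans (size_polyMleq _ _)) // -polyC1 size_exp_XsubC.
  by have := size_Gpoly z y; rewrite (rankD rhoE (ltW lt_xz) le_zy); lia.
have recip_R : recip (r x y) R = - R.
  apply: evt_uK_inj; rewrite evt_recip ?uK_neq0 // rmorphN !evt_sum_XB1.
  rewrite -sum_sign_conv // mulr_sumr; apply: eq_bigr => z /andP[lt_xz le_zy].
  rewrite -evt_sum_XB1 -IH ?(rank_ltl rhoE lt_xz le_zy) // evt_recip ?uK_neq0 ?size_Gpoly //.
  rewrite (rankD rhoE (ltW lt_xz) le_zy) exprD -mulrA [uK ^+ r z y * _]mulrCA !mulrA.
  by rewrite -exprMn mulrBr mulr1 mulfV ?uK_neq0 // opprB.
by rewrite G_R recip_trunc_half // -G_R sum_itv_lo // subnn expr0 mul1r.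
Qed.

Lemma Gpoly_dual (t : Kuv) x y : t != 0 -> (x <= y)%O ->
  t ^+ r x y * evt t^-1 (G x y) =
  \sum_(z | (x <= z <= y)%O) (t - 1) ^+ r x z * evt t (G z y).
Proof.
by move=> t_neq0 le_xy; rewrite -evt_recip ?size_Gpoly // Gpoly_recip // evt_sum_XB1.
Qed.

Definition Ghom z y : Kuv := uK ^+ r z y * evt (uK^-1 * vK) (G z y).

Lemma Ghom_id y : Ghom y y = 1.
Proof. by rewrite /Ghom subnn Gpoly_id expr0 mul1r rmorph1. Qed.

Lemma Bfun_unique (F : P -> P -> Kuv) :
  (forall x, F x x = 1) ->
  (forall x y, (x <= y)%O ->
     \sum_(z | (x <= z <= y)%O) F x z * Ghom z y = evt (uK * vK) (G x y)) ->
  forall x y, (x <= y)%O -> F x y = Bfun rho x y.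
Proof.
move=> F_id F_rel; apply: (@rank_ind _ _ rho) => x y IH le_xy.
have [<-|ne_xy] := eqVneq x y; first by rewrite F_id Bfun_id.
have lt_xy : (x < y)%O by rewrite lt_neqAle ne_xy.
rewrite BfunE // eval_tE -(F_rel x y) // sum_itv_hi // Ghom_id mulr1.
have -> : \sum_(z | (x <= z < y)%O) Bfun rho x z * uK ^+ r z y * eval_t (G z y) (uK^-1 * vK)
        = \sum_(z | (x <= z < y)%O) F x z * Ghom z y.
  apply: eq_bigr => z /andP[le_xz lt_zy].
  by rewrite -mulrA -IH ?(rank_ltr rhoE le_xz lt_zy) ?(ltW lt_zy).
by rewrite addrK.
Qed.

End KLPolynomials.

Section Defect.
Context {d : Order.disp_t} {P : finTBPOrderType d} (rho : P -> nat).
Hypothesis rhoE : eulerian rho.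
Implicit Types x y z w : P.
Local Notation r x y := (rho y - rho x)%N.
Local Notation G := (Gpoly rho).
Local Notation ev := (evuv uK vK).
Local Notation evb := (evuv uK^-1 vK^-1).

Variable B' : P -> P -> Zuv.
Hypothesis B'_id : forall x, B' x x = 1.
Hypothesis B'_deg : forall x y, (x < y)%O -> ((size (B' x y)).-1.*2 < r x y)%N.
Hypothesis B'_dual : forall x y, (x <= y)%O ->
  \sum_(z | (x <= z <= y)%O) evb (B' x z) * (uK * vK) ^+ r x z * (vK - uK) ^+ r z y
  = \sum_(z | (x <= z <= y)%O) ev (B' z y) * (uK * vK - 1) ^+ r x z.

Lemma low_deg_B' x y : (x <= y)%O -> low_deg (r x y) (B' x y).
Proof.
rewrite le_eqVlt => /predU1P[<-|lt_xy]; first by rewrite B'_id subnn; exact: low_deg1.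
move=> j _ le_rj; apply: nth_default.
have := leq_trans (B'_deg lt_xy) le_rj; rewrite ltn_double.
exact: leq_trans (leqSpred _).
Qed.

Definition defect x y : Zuv :=
  \sum_(z | (x <= z <= y)%O) B' x z * homog (r z y) (G z y) - subst_uv (G x y).

Lemma evuv_defect x y : ev (defect x y) =
  \sum_(z | (x <= z <= y)%O) ev (B' x z) * Ghom rho z y - evt (uK * vK) (G x y).
Proof.
rewrite rmorphB rmorph_sum evuv_subst_uv; congr (_ - _); apply: eq_bigr => z _.
by rewrite rmorphM evuv_homog ?uK_neq0 ?size_Gpoly.
Qed.

Lemma low_deg_defect x y : (x <= y)%O -> low_deg (r x y) (defect x y).
Proof.
move=> le_xy; apply: low_degD; last exact/low_degN/low_deg_subst_uv/low_deg_Gpoly.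
apply: low_deg_sum => z /andP[le_xz le_zy]; rewrite (rankD rhoE le_xz le_zy).
by apply: low_degM; [exact: low_deg_B' | exact/low_deg_homog/low_deg_Gpoly].
Qed.

Lemma dual_subst_uv x y : (x <= y)%O ->
  (uK * vK) ^+ r x y * evb (subst_uv (G x y)) =
  \sum_(z | (x <= z <= y)%O) (uK * vK - 1) ^+ r x z * evt (uK * vK) (G z y).
Proof.
move=> le_xy; rewrite evuv_subst_uv -invfM Gpoly_dual //.
exact: mulf_neq0 uK_neq0 vK_neq0.
Qed.

Lemma dual_homog z y : (z <= y)%O ->
  (uK * vK) ^+ r z y * evb (homog (r z y) (G z y)) =
  \sum_(w | (z <= w <= y)%O) (vK - uK) ^+ r z w * Ghom rho w y.
Proof.
move=> le_zy; pose t := uK^-1 * vK.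
have t_neq0 : t != 0 := mulf_neq0 (invr_neq0 uK_neq0) vK_neq0.
have inv_t : uK^-1^-1 * vK^-1 = t^-1 by rewrite invrK invfM invrK mulrC.
have uv_t m : (uK * vK) ^+ m * uK^-1 ^+ m = uK ^+ m * t ^+ m.
  by rewrite -!exprMn mulrAC mulfV ?uK_neq0 // mul1r mulrA mulfV ?uK_neq0 // mul1r.
have vu_t : vK - uK = uK * (t - 1).
  by rewrite mulrBr mulr1 mulrA mulfV ?uK_neq0 // mul1r.
rewrite evuv_homog ?invr_eq0 ?uK_neq0 ?size_Gpoly // inv_t mulrA uv_t -mulrA.
rewrite Gpoly_dual // mulr_sumr; apply: eq_bigr => w /andP[le_zw le_wy].
rewrite /Ghom -/t (rankD rhoE le_zw le_wy) exprD vu_t exprMn -!mulrA; congr (_ * _).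
exact: mulrCA.
Qed.

Lemma dual_sum_B'_homog x y : (x <= y)%O ->
  \sum_(z | (x <= z <= y)%O) (uK * vK) ^+ r x y * evb (B' x z * homog (r z y) (G z y)) =
  \sum_(z | (x <= z <= y)%O) (uK * vK - 1) ^+ r x z *
     \sum_(w | (z <= w <= y)%O) ev (B' z w) * Ghom rho w y.
Proof.
move=> le_xy; have x_up z w : (x <= z)%O -> (z <= w)%O -> (x <= w)%O by apply: le_trans.
transitivity (\sum_(z | (x <= z <= y)%O) \sum_(w | (z <= w <= y)%O)
    evb (B' x z) * (uK * vK) ^+ r x z * ((vK - uK) ^+ r z w * Ghom rho w y)).
  apply: eq_bigr => z /andP[le_xz le_zy]; rewrite -mulr_sumr -dual_homog //.
  by rewrite rmorphM (rankD rhoE le_xz le_zy) exprD mulrACA (mulrC (_ ^+ r x z)).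
rewrite (exchange_sum_itv (A := fun z => x <= z)%O) //.
under [RHS]eq_bigr do rewrite mulr_sumr.
rewrite [RHS](exchange_sum_itv (A := fun z => x <= z)%O) //.
apply: eq_bigr => w /andP[le_xw le_wy].
under eq_bigr do rewrite mulrA.
rewrite -mulr_suml B'_dual // mulr_suml; apply: eq_bigr => z _.
by rewrite -mulrA mulrCA.
Qed.

Lemma dual_defect x y : (x <= y)%O ->
  (uK * vK) ^+ r x y * evb (defect x y) =
  \sum_(z | (x <= z <= y)%O) (uK * vK - 1) ^+ r x z * ev (defect z y).
Proof.
move=> le_xy; rewrite rmorphB rmorph_sum mulrBr mulr_sumr dual_subst_uv // dual_sum_B'_homog //.
by rewrite -sumrB; apply: eq_bigr => z _; rewrite evuv_defect mulrBr.
Qed.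

Lemma defect_eq0 x y : (x <= y)%O -> ev (defect x y) = 0.
Proof.
move: x y; apply: (@rank_ind _ _ rho) => x y IH le_xy.
have [<-|ne_xy] := eqVneq x y.
  by rewrite evuv_defect sum_itv_id B'_id rmorph1 mul1r Ghom_id Gpoly_id rmorph1 subrr.
have lt_xy : (x < y)%O by rewrite lt_neqAle ne_xy.
have := dual_defect le_xy; rewrite sum_itv_lo // subnn expr0 mul1r big1 ?addr0 => [dual|z].
  apply/eqP; rewrite (selfdual_low_deg_eq0 _ (low_deg_defect le_xy) (esym dual)) ?rmorph0 //.
  by have := rho_lt rhoE lt_xy; lia.
by case/andP=> lt_xz le_zy; rewrite IH ?mulr0 // (rank_ltl rhoE lt_xz le_zy).
Qed.

End Defect.

Theorem proposition2p12 (d : Order.disp_t) (P : finTBPOrderType d)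
  (rho : P -> nat) (HE : eulerian rho) (B' : P -> P -> Zuv) :
  (forall x : P, B' x x = 1) ->
  (forall x y : P, (x < y)%O -> ((size (B' x y)).-1.*2 < rho y - rho x)%N) ->
  (forall x y : P, (x <= y)%O ->
     \sum_(z : P | (x <= z)%O && (z <= y)%O)
        eval_uv uK^-1 vK^-1 (B' x z) * (uK * vK) ^+ (rho z - rho x)%N
          * (vK - uK) ^+ (rho y - rho z)%N
     = \sum_(z : P | (x <= z)%O && (z <= y)%O)
        eval_uv uK vK (B' z y) * (uK * vK - 1) ^+ (rho z - rho x)%N) ->
  forall x y : P, (x <= y)%O -> eval_uv uK vK (B' x y) = Bfun rho x y.
Proof.
move=> B'_id B'_deg B'_dual.
apply: (Bfun_unique HE (F := fun x y => evuv uK vK (B' x y))) => [x|x y le_xy].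
  by rewrite B'_id rmorph1.
by apply/eqP; rewrite -subr_eq0 -evuv_defect (defect_eq0 HE B'_id B'_deg B'_dual).
Qed.
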